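(* Let $G$ be a finite group and $T$ a $G$-transfer system with exactly one connected component. Then $T$ is lesser simply paired; in fact the only $G$-transfer system $T'$ with $(T,T')$ compatible is $T'=T_c=\mathrm{Hull}(T)$.
   Context: A $G$-transfer system is a partial order $\to$ on the set of subgroups of $G$ such that: $K\to H$ implies $K\le H$; $H\to H$ for all $H$; $L\to K$ and $K\to H$ imply $L\to H$; $K\to H$ implies $K\cap L\to H\cap L$ for every $L\le G$; $K\to H$ implies $gKg^{-1}\to gHg^{-1}$ for all $g\in G$. Connected components are those of the underlying undirected graph on subgroups with edges $K\to H$. A transfer system is saturated if whenever $L\le K\le H$ and $L\to H$ is in it, then $K\to H$ is in it; $\mathrm{Hull}(T)$ is the smallest saturated $G$-transfer system containing $T$; $T_c$ is the complete transfer system containing $K\to H$ for all $K\le H$. A pair $(T,T')$ is compatible if (1) $T\subseteq T'$, and (2) for all subgroups $A,B,C$ with $B,C\le A$: if $B\to A$ is in $T$ and $B\cap C\to B$ is in $T'$, then $C\to A$ is in $T'$. $T$ is lesser simply paired if for every $G$-transfer system $T'\supseteq T$, $(T,T')$ is compatible if and only if $T'\in\{\mathrm{Hull}(T),T_c\}$. *)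

From mathcomp Require Import all_boot all_fingroup.
From Stdlib Require Import Relations.
Set Implicit Arguments. Unset Strict Implicit. Unset Printing Implicit Defensive.

Local Open Scope group_scope.

(* A relation on subgroups of G: trel gT K H stands for K -> H. *)
Definition trel (gT : finGroupType) := {group gT} -> {group gT} -> Prop.

Section TS.
Variables (gT : finGroupType) (G : {group gT}).

(* G-transfer system: a partial order on the subgroups of G (antisymmetry
   follows from the refinement of inclusion) satisfying the axioms. *)
Definition transfer_system (T : trel gT) : Prop :=
  [/\ (forall K H, T K H -> [/\ K \subset H, K \subset G & H \subset G]),
      (forall H : {group gT}, H \subset G -> T H H),
      (forall L K H, T L K -> T K H -> T L H),
      (forall K H L : {group gT}, T K H -> L \subset G ->
          T (K :&: L)%G (H :&: L)%G) &
      (forall K H g, T K H -> g \in G -> T (K :^ g)%G (H :^ g)%G)].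

Definition sub_trel (T T' : trel gT) : Prop := forall K H, T K H -> T' K H.
Definition eq_trel (T T' : trel gT) : Prop := forall K H, T K H <-> T' K H.

Definition undirected (T : trel gT) : relation {group gT} :=
  fun K H => T K H \/ T H K.

(* T has exactly one connected component (the set of subgroups of G is
   nonempty, so this means any two subgroups of G are connected). *)
Definition one_component (T : trel gT) : Prop :=
  forall H K : {group gT}, H \subset G -> K \subset G ->
    clos_refl_sym_trans _ (undirected T) H K.

Definition saturated (T : trel gT) : Prop :=
  forall L K H : {group gT}, L \subset K -> K \subset H -> T L H -> T K H.

Definition Hull (T : trel gT) : trel gT :=
  fun K H => forall S : trel gT,
    transfer_system S -> saturated S -> sub_trel T S -> S K H.

Definition Tc : trel gT := fun K H => K \subset H /\ H \subset G.

Definition compatible (T T' : trel gT) : Prop :=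
  sub_trel T T' /\
  forall A B C : {group gT}, B \subset A -> C \subset A ->
    T B A -> T' (B :&: C)%G B -> T' C A.

Definition lesser_simply_paired (T : trel gT) : Prop :=
  forall T' : trel gT, transfer_system T' -> sub_trel T T' ->
    (compatible T T' <-> (eq_trel T' (Hull T) \/ eq_trel T' Tc)).

End TS.

From mathcomp Require Import all_boot all_fingroup.
From Stdlib Require Import Relations.
Set Implicit Arguments. Unset Strict Implicit. Unset Printing Implicit Defensive.

Local Open Scope group_scope.

(* Restricting a transfer K -> H to K shows that 1 -> K holds iff 1 -> H does,
   so with a single connected component 1 -> H holds for every H <= G.  A
   saturated system containing all 1 -> H contains every K -> H, so Hull(T) is
   complete; and compatibility with B = 1 forces C -> A into T' for every
   C <= A, so T' is complete as well. *)

Section OneComponent.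
Variables (gT : finGroupType) (G : {group gT}).

Lemma Tc_transfer_system : transfer_system G (Tc G).
Proof.
split.
- by move=> K H [sKH sHG]; rewrite sKH sHG (subset_trans sKH sHG).
- by move=> H sHG; split.
- by move=> L K H [sLK _] [sKH sHG]; split; first exact: subset_trans sKH.
- move=> K H L [sKH sHG] _; split; first exact: setSI.
  exact: subset_trans (subsetIl _ _) sHG.
- move=> K H g [sKH sHG] Gg; split; first by rewrite conjSg.
  by rewrite -(conjGid Gg) conjSg.
Qed.

Lemma transfer_system_sub_Tc (T : trel gT) :
  transfer_system G T -> sub_trel T (Tc G).
Proof. by move=> [Tsub _ _ _ _] K H /Tsub[]. Qed.

Lemma Tc_saturated : saturated (Tc G).
Proof. by move=> L K H _ sKH [_ sHG]. Qed.

Lemma transfer_from1_iff (T : trel gT) (K H : {group gT}) :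
  transfer_system G T -> T K H -> T 1%G K <-> T 1%G H.
Proof.
move=> [Tsub _ Ttrans Tres _] TKH; split=> [T1K | T1H]; first exact: Ttrans TKH.
have [sKH sKG _] := Tsub _ _ TKH.
have := Tres _ _ K T1H sKG.
have -> : (1 :&: K)%G = 1%G by apply: val_inj; rewrite /= setI1g.
by have -> : (H :&: K)%G = K by apply: val_inj; apply/setIidPr.
Qed.

Lemma one_component_transfer_from1 (T : trel gT) :
  transfer_system G T -> one_component G T ->
  forall H : {group gT}, H \subset G -> T 1%G H.
Proof.
move=> Tts Tconn H sHG.
have conn_iff K L : clos_refl_sym_trans _ (undirected T) K L ->
    T 1%G K <-> T 1%G L.
  elim=> {K L} [K L [TKL | TLK] | K | K L _ LK | K L M _ KL _ LM].
  - exact: transfer_from1_iff.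
  - by apply: iff_sym; apply: transfer_from1_iff TLK.
  - by [].
  - exact: iff_sym.
  - exact: iff_trans KL LM.
have [_ Trefl _ _ _] := Tts.
apply: (conn_iff _ _ (Tconn _ _ (sub1G G) sHG)).1; exact: Trefl (sub1G G).
Qed.

Lemma eq_Tc_compatible (T T' : trel gT) :
  transfer_system G T -> eq_trel T' (Tc G) -> compatible T T'.
Proof.
move=> Tts eqT'; split=> [K H /(transfer_system_sub_Tc Tts)/eqT' // |].
by move=> A B C _ sCA /(transfer_system_sub_Tc Tts)[_ sAG] _; apply/eqT'.
Qed.

Section TransfersFromTrivial.
Variable T : trel gT.
Hypothesis T1 : forall H : {group gT}, H \subset G -> T 1%G H.

Lemma Tc_sub_saturated (S : trel gT) :
  saturated S -> sub_trel T S -> sub_trel (Tc G) S.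
Proof.
by move=> Ssat sTS K H [sKH sHG]; apply: Ssat (sub1G K) sKH (sTS _ _ (T1 sHG)). Qed.

Lemma Hull_eq_Tc : transfer_system G T -> eq_trel (Hull G T) (Tc G).
Proof.
move=> Tts K H; split=> [HullKH | TcKH S _ Ssat sTS].
- exact: HullKH Tc_transfer_system Tc_saturated (transfer_system_sub_Tc Tts).
- exact: Tc_sub_saturated TcKH.
Qed.

Lemma compatible_eq_Tc (T' : trel gT) :
  transfer_system G T' -> compatible T T' -> eq_trel T' (Tc G).
Proof.
move=> T'ts [_ Tcomp] K H; split; first exact: transfer_system_sub_Tc.
move=> [sKH sHG]; apply: Tcomp (sub1G H) sKH (T1 sHG) _.
have -> : (1 :&: K)%G = 1%G by apply: val_inj; rewrite /= setI1g.
by have [_ T'refl _ _ _] := T'ts; apply: T'refl (sub1G G).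
Qed.

End TransfersFromTrivial.
End OneComponent.

Theorem mainTheorem8 (gT : finGroupType) (G : {group gT}) (T : trel gT) :
  transfer_system G T -> one_component G T ->
  lesser_simply_paired G T /\
  (forall T' : trel gT, transfer_system G T' -> sub_trel T T' ->
     (compatible T T' <-> eq_trel T' (Tc G))) /\
  eq_trel (Hull G T) (Tc G).
Proof.
move=> Tts Tconn.
have T1 := one_component_transfer_from1 Tts Tconn.
have hull := Hull_eq_Tc T1 Tts.
have compE T' : transfer_system G T' -> sub_trel T T' ->
    compatible T T' <-> eq_trel T' (Tc G).
  by move=> T'ts _; split; [exact: compatible_eq_Tc | exact: eq_Tc_compatible].
split; last by split.
move=> T' T'ts sTT'; split=> [/(compE _ T'ts sTT') | [eqT' | eqT']]; first by right.
- apply: (eq_Tc_compatible Tts) => K H; apply: iff_trans (eqT' K H) (hull K H).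
- exact: eq_Tc_compatible Tts eqT'.
Qed.
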